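(* Let $A$ be a finite set and let $(v_{xy})$ be a Llull matrix on $A$ with CLC structure, and let $\xi$ be any admissible order for it. (1) Suppose $t_{xy}>0$ for all distinct $x,y\in A$, and let $q_{xy}=v_{xy}/t_{xy}$. Then $q_{xy}\ge q_{yx}$ whenever $x<_\xi y$, and $q_{xz}\ge q_{yz}$ and $q_{zx}\le q_{zy}$ whenever $x<_\xi y$ and $z\notin\{x,y\}$. Moreover, the top dominant irreducible component $X$ of $A$ for $(v_{xy})$ is also a top dominant irreducible component of $A$ for $(q_{xy})$, and $q_{xy}>0$ whenever $x\in X$ and $y\neq x$. (2) Suppose $t_{xy}=0$ for some distinct $x,y\in A$. Then there exists $Y\subseteq A$ such that $t_{x\bar x}>0$ for all distinct $x,\bar x\notin Y$, and $v_{yx}=0$ for all $y\in Y$ and all $x\neq y$.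
   Context: A Llull matrix on a finite set $A$ is an assignment to each ordered pair of distinct elements $x\neq y$ of $A$ of a number $v_{xy}\in[0,1]$ such that $v_{xy}+v_{yx}\le 1$. Turnouts: $t_{xy}=v_{xy}+v_{yx}$; margins: $m_{xy}=v_{xy}-v_{yx}$. The matrix has CLC structure if there is a total order $\xi$ on $A$ (an admissible order) such that, writing $x<_\xi y$ when $x$ precedes $y$ and $x'$ for the immediate successor of $x$ in $\xi$ (when it exists): (i) $v_{xy}\ge v_{yx}$ whenever $x<_\xi y$; (ii) $v_{xz}=\max(v_{xy},v_{yz})$ whenever $x<_\xi y<_\xi z$; (iii) $v_{zx}=\min(v_{zy},v_{yx})$ whenever $x<_\xi y<_\xi z$; (iv) $0\le t_{xz}-t_{x'z}\le m_{xx'}$ whenever $x'$ exists and $z\notin\{x,x'\}$. For any Llull matrix $(w_{xy})$: indirect scores $\hat w_{xy}=\max$ over paths $x=x_0,\dots,x_n=y$ of $\min_i w_{x_ix_{i+1}}$; irreducible components are classes of $x\sim y$ iff $x=y$ or ($\hat w_{xy}>0$ and $\hat w_{yx}>0$); $x$ dominates $y$ iff $\hat w_{xy}>0$ and $\hat w_{yx}=0$, which passes to components; a top dominant irreducible component is one dominating every other component. A non-vanishing Llull matrix with CLC structure has a (unique) top dominant irreducible component. *)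

From mathcomp Require Import all_boot all_order all_algebra.
Set Implicit Arguments. Unset Strict Implicit. Unset Printing Implicit Defensive.
Import Order.TTheory GRing.Theory Num.Theory.
Local Open Scope ring_scope.

Section Llull.
Variables (R : realFieldType) (T : finType).

Definition llull (w : T -> T -> R) : Prop :=
  forall x y, x != y -> [/\ 0 <= w x y, w x y <= 1 & w x y + w y x <= 1].

Definition turnout (w : T -> T -> R) x y : R := w x y + w y x.
Definition margin  (w : T -> T -> R) x y : R := w x y - w y x.

Definition strict_total (lt : rel T) : Prop :=
  [/\ forall x, ~~ lt x x,
      forall x y z, lt x y -> lt y z -> lt x z &
      forall x y, x != y -> lt x y || lt y x].

Definition imm_succ (lt : rel T) (x y : T) : Prop :=
  lt x y /\ forall z, ~ (lt x z /\ lt z y).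

Definition admissible (v : T -> T -> R) (lt : rel T) : Prop :=
  [/\ strict_total lt,
      (forall x y, lt x y -> v y x <= v x y),
      (forall x y z, lt x y -> lt y z -> v x z = Num.max (v x y) (v y z)),
      (forall x y z, lt x y -> lt y z -> v z x = Num.min (v z y) (v y x)) &
      (forall x x' z, imm_succ lt x x' -> z != x -> z != x' ->
         0 <= turnout v x z - turnout v x' z /\
         turnout v x z - turnout v x' z <= margin v x x')].

Definition has_CLC (v : T -> T -> R) : Prop := exists lt, admissible v lt.

(* Minimum of the weights along the path x = x_0, x_1, ..., x_n (p = [x_1;...;x_n],
   n >= 1); only meaningful for nonempty p. *)
Fixpoint path_min (w : T -> T -> R) (x : T) (p : seq T) : R :=
  match p with
  | [::] => 0
  | y :: p' => match p' with
               | [::] => w x y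
               | _ :: _ => Num.min (w x y) (path_min w y p')
               end
  end.

Definition is_ind_score (w : T -> T -> R) (x y : T) (r : R) : Prop :=
  (exists p : seq T, p != [::] /\ last x p = y /\ path_min w x p = r) /\
  (forall p : seq T, p != [::] -> last x p = y -> path_min w x p <= r).

Definition ind_pos (w : T -> T -> R) x y : Prop :=
  exists r, is_ind_score w x y r /\ 0 < r.

Definition ind_zero (w : T -> T -> R) x y : Prop := is_ind_score w x y 0.

Definition irr_equiv (w : T -> T -> R) x y : Prop :=
  x = y \/ (ind_pos w x y /\ ind_pos w y x).

Definition dominates (w : T -> T -> R) x y : Prop :=
  ind_pos w x y /\ ind_zero w y x.

Definition irr_component (w : T -> T -> R) (X : {set T}) : Prop :=
  exists x, forall y, y \in X <-> irr_equiv w x y.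

Definition comp_dominates (w : T -> T -> R) (X Y : {set T}) : Prop :=
  exists x y, [/\ x \in X, y \in Y & dominates w x y].

Definition top_dominant (w : T -> T -> R) (X : {set T}) : Prop :=
  irr_component w X /\
  forall Y, irr_component w Y -> Y != X -> comp_dominates w X Y.

End Llull.

(* (1) With positive turnouts, q = v / t has the same positive entries as v,
   so both matrices have the same graph of positive edges, and indirect-score
   positivity, components and dominance depend only on that graph.  The
   comparisons of q are cross-multiplied forms of conditions (i)-(iii).  A
   member x of the top component reaches every element.  If v_xy = 0 with
   y < x, take the largest y0 below x with v_x,y0 = 0: by (iii) no positive
   edge leads from above y0 to y0 or below, so x cannot reach y; if x < y,
   then v_xy >= v_yx and v_xy + v_yx > 0.
   (2) If t_ab = 0 with a < b, the whole row of b vanishes: below a by (iii),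
   between a and b by (i)-(ii), and above b because (iv) makes t_xa decrease
   along the order, forcing v_ax = 0 >= v_bx.  So Y is the set of vanishing
   rows. *)

From mathcomp Require Import all_boot all_order all_algebra.
From mathcomp Require Import boolp lra.
From Stdlib Require Import Wf_nat.
Import Order.TTheory GRing.Theory Num.Theory.
Local Open Scope ring_scope.
Set Implicit Arguments. Unset Strict Implicit. Unset Printing Implicit Defensive.

Section IndirectScores.
Variables (R : realFieldType) (T : finType) (w : T -> T -> R).

Definition pos_edge : rel T := [rel a b | (a != b) && (0 < w a b)].

Lemma path_min_cons x y p :
  p != [::] -> path_min w x (y :: p) = Num.min (w x y) (path_min w y p).
Proof. by case: p. Qed.

Lemma path_min_gt0 x p :
  p != [::] -> (0 < path_min w x p) = path [rel a b | 0 < w a b] x p.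
Proof.
elim: p x => [//|y [|z p] IHp] x _; first by rewrite /= andbT.
by rewrite path_min_cons // lt_min IHp.
Qed.

Lemma path_min_weight x p :
  p != [::] -> exists ab : T * T, path_min w x p = w ab.1 ab.2.
Proof.
elim: p x => [//|y [|z p] IHp] x _; first by exists (x, y).
have [ab abE] := IHp y isT; rewrite path_min_cons // abE.
by rewrite /Order.min; case: ifP => _; [exists (x, y) | exists ab].
Qed.

(* Path minima range over the finitely many weights, so a best path exists. *)
Lemma ind_score_exists x y : exists r, is_ind_score w x y r.
Proof.
pose attained (ab : T * T) := exists2 p : seq T,
  (p != [::]) && (last x p == y) & path_min w x p = w ab.1 ab.2.
have attained_xy : `[< attained (x, y) >].
  by apply/asboolP; exists [:: y]; rewrite ?eqxx.
have [ab /asboolP[p /andP[p0 /eqP py] pab] ab_max] :=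
  @arg_maxP _ _ _ _ (fun ab => `[< attained ab >]) (fun ab => w ab.1 ab.2) attained_xy.
exists (w ab.1 ab.2); split; first by exists p.
move=> p' p'0 p'y; have [ab' ab'E] := path_min_weight x p'0; rewrite ab'E.
by apply: ab_max; apply/asboolP; exists p'; rewrite ?p'0 ?p'y ?eqxx.
Qed.

Lemma ind_score_unique x y r s :
  is_ind_score w x y r -> is_ind_score w x y s -> r = s.
Proof.
move=> [[p [p0 [py <-]]] r_max] [[p' [p'0 [p'y <-]]] s_max].
by apply/eqP; rewrite eq_le s_max // r_max.
Qed.

Lemma connect_pos_path x p :
  path [rel a b | 0 < w a b] x p -> connect pos_edge x (last x p).
Proof.
elim: p x => [|y p IHp] x /=; first by rewrite connect0.
case/andP=> wxy /IHp; apply: connect_trans.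
by case: (eqVneq x y) => [->|xy]; [exact: connect0 | apply: connect1; apply/andP].
Qed.

Lemma connect_pos_path_gt0 x y :
  x != y -> connect pos_edge x y ->
  exists p, [/\ p != [::], last x p = y & 0 < path_min w x p].
Proof.
move=> xy /connectP[p e_p yE].
have p0 : p != [::] by apply: contraNneq xy => p0; rewrite yE p0.
exists p; split => //; rewrite path_min_gt0 //.
by apply: sub_path e_p => a b /andP[].
Qed.

Lemma ind_posE x y : x != y -> ind_pos w x y <-> connect pos_edge x y.
Proof.
move=> xy; split.
  move=> [r [[[p [p0 [py pr]]] _] r_gt0]].
  by rewrite -py connect_pos_path // -path_min_gt0 // pr.
move=> /(connect_pos_path_gt0 xy)[p [p0 py p_gt0]].
have [r r_score] := ind_score_exists x y.
by exists r; split => //; apply: lt_le_trans p_gt0 (r_score.2 p p0 py).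
Qed.

Lemma ind_zeroE x y :
  x != y -> 0 <= w x y -> ind_zero w x y <-> ~~ connect pos_edge x y.
Proof.
move=> xy wxy_ge0; split.
  move=> [_ zero_max]; apply/negP => /(connect_pos_path_gt0 xy)[p [p0 py p_gt0]].
  by have := zero_max p p0 py; rewrite leNgt p_gt0.
move=> no_path; have path_le0 p : p != [::] -> last x p = y -> path_min w x p <= 0.
  move=> p0 py; rewrite leNgt; apply: contra no_path => p_gt0.
  by rewrite -py connect_pos_path // -path_min_gt0.
split=> //; exists [:: y]; split=> //; split=> //=.
by apply/eqP; rewrite eq_le wxy_ge0 (path_le0 [:: y]).
Qed.

Lemma irr_equivE x y :
  irr_equiv w x y <-> connect pos_edge x y && connect pos_edge y x.
Proof.
case: (eqVneq x y) => [->|xy]; first by rewrite connect0; split=> // _; left.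
have yx : y != x by rewrite eq_sym.
split=> [[/eqP|[/(ind_posE xy)-> /(ind_posE yx)->]] //|]; first by rewrite (negbTE xy).
by case/andP=> /(ind_posE xy) xy_pos /(ind_posE yx) yx_pos; right.
Qed.

Lemma irr_component_connect X x y :
  irr_component w X -> x \in X -> y \in X -> connect pos_edge x y.
Proof.
move=> [c Xc] /Xc/irr_equivE/andP[_ xc] /Xc/irr_equivE/andP[cy _].
exact: connect_trans xc cy.
Qed.

Hypothesis w_ge0 : forall a b, a != b -> 0 <= w a b.

Lemma dominatesE x y :
  dominates w x y <-> connect pos_edge x y && ~~ connect pos_edge y x.
Proof.
case: (eqVneq x y) => [->|xy].
  rewrite connect0; split=> // -[[r [r_score r_gt0]] zero_score].
  by rewrite (ind_score_unique r_score zero_score) ltxx in r_gt0.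
have yx : y != x by rewrite eq_sym.
rewrite /dominates (ind_posE xy) (ind_zeroE yx (w_ge0 yx)).
by split=> [[-> ->]|/andP[]].
Qed.

(* The component of [y] is either [X] itself or dominated by [X]; either way
   [X] reaches [y]. *)
Lemma top_dominant_connect X x :
  top_dominant w X -> x \in X -> forall y, connect pos_edge x y.
Proof.
move=> [X_comp X_top] xX y.
pose C := [set z | connect pos_edge y z && connect pos_edge z y].
have C_comp : irr_component w C by exists y => z; rewrite inE irr_equivE.
have yC : y \in C by rewrite inE connect0.
case: (eqVneq C X) => [CX|/(X_top C C_comp)[a [b [aX bC /dominatesE/andP[ab _]]]]].
  by apply: irr_component_connect X_comp xX _; rewrite -CX.
move: bC; rewrite inE => /andP[_ by_].
exact: connect_trans (irr_component_connect X_comp xX aX) (connect_trans ab by_).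
Qed.

End IndirectScores.

Lemma top_dominant_pos_edge (R : realFieldType) (T : finType)
    (w w' : T -> T -> R) (X : {set T}) :
  (forall a b, a != b -> 0 <= w a b) -> (forall a b, a != b -> 0 <= w' a b) ->
  pos_edge w =2 pos_edge w' -> top_dominant w X -> top_dominant w' X.
Proof.
move=> w_ge0 w'_ge0 ww' [X_comp X_top].
have compE Y : irr_component w Y <-> irr_component w' Y.
  by split=> -[c Yc]; exists c => z; rewrite Yc !irr_equivE !(eq_connect ww').
split; first exact/compE.
move=> Y /compE Y_comp YX; have [a [b [aX bY]]] := X_top Y Y_comp YX.
rewrite dominatesE // !(eq_connect ww') => ab.
by exists a, b; split=> //; apply/dominatesE.
Qed.

Section StrictTotalOrder.
Variables (T : finType) (lt : rel T).
Hypothesis lt_total : strict_total lt.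

Lemma strict_neq a b : lt a b -> a != b.
Proof. by case: lt_total => irr _ _ ab; apply: contraTneq ab => ->; apply: irr. Qed.

Lemma strict_trans a b c : lt a b -> lt b c -> lt a c.
Proof. by case: lt_total => _ tr _; apply: tr. Qed.

Lemma strict_trichotomy a b : [\/ a = b, lt a b | lt b a].
Proof.
case: (eqVneq a b) => [|ab]; first by constructor 1.
by case: lt_total => _ _ /(_ a b ab)/orP[]; [constructor 2 | constructor 3].
Qed.

Let rank c := #|[set d | lt d c]|.

Lemma rank_lt a b : lt a b -> (rank a < rank b)%N.
Proof.
case: lt_total => irr tr _ ab; apply: proper_card; apply/properP; split.
  by apply/subsetP => d; rewrite !inE => da; apply: tr da ab.
by exists a; rewrite !inE ?ab ?irr.
Qed.

Lemma strict_wf : well_founded (fun a b => lt a b).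
Proof. by apply: (well_founded_lt_compat _ rank) => a b /rank_lt/ssrnat.ltP. Qed.

Lemma strict_exists_max (P : pred T) y :
  P y -> exists2 m, P m & forall c, P c -> ~~ lt m c.
Proof.
move=> Py; case: (arg_maxnP rank Py) => m Pm m_max.
by exists m => // c /m_max; apply: contraTN => /rank_lt; rewrite -ltnNge.
Qed.

Lemma strict_exists_pred a b :
  lt a b -> exists2 p, imm_succ lt p b & a = p \/ lt a p.
Proof.
move=> ab; have [p pb p_max] := strict_exists_max (P := fun c => lt c b) ab.
exists p; first by split=> // z [pz zb]; move: (p_max z zb); rewrite pz.
case: (strict_trichotomy a p) => [->|ap|pa]; [by left | by right |].
by move: (p_max a ab); rewrite pa.
Qed.

End StrictTotalOrder.

Lemma connect_stable (T : finType) (e : rel T) (U : pred T) x y :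
  (forall a b, e a b -> U a -> U b) -> connect e x y -> U x -> U y.
Proof.
move=> e_stable /connectP[p e_p ->]; elim: p x e_p => //= z p IHp x.
by case/andP=> /e_stable xz /IHp zp /xz.
Qed.

Lemma ratio_le (R : realFieldType) (a b c d : R) :
  0 < a + b -> 0 < c + d -> a * d <= c * b -> a / (a + b) <= c / (c + d).
Proof.
move=> ab_gt0 cd_gt0 adcb; rewrite ler_pdivrMr // mulrAC ler_pdivlMr //.
by rewrite !mulrDr [c * a]mulrC lerD2l.
Qed.

Lemma llull_ge0 (R : realFieldType) (T : finType) (v : T -> T -> R) a b :
  llull v -> a != b -> 0 <= v a b.
Proof. by move=> v_llull /v_llull[]. Qed.

Definition turnout_ratio (R : realFieldType) (T : finType) (v : T -> T -> R) x y :=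
  v x y / turnout v x y.

Section CLCStructure.
Variables (R : realFieldType) (T : finType) (v : T -> T -> R) (lt : rel T).
Hypotheses (v_llull : llull v) (v_adm : admissible v lt).

Let v_ge0 a b : a != b -> 0 <= v a b. Proof. exact: llull_ge0. Qed.
Let lt_total : strict_total lt. Proof. by case: v_adm. Qed.
Let v_lt a b : lt a b -> v b a <= v a b.
Proof. by case: v_adm => _ + _ _ _; apply. Qed.
Let v_max a b c : lt a b -> lt b c -> v a c = Num.max (v a b) (v b c).
Proof. by case: v_adm => _ _ + _ _; apply. Qed.
Let v_min a b c : lt a b -> lt b c -> v c a = Num.min (v c b) (v b a).
Proof. by case: v_adm => _ _ _ + _; apply. Qed.

Let turnout_step x x' z :
  imm_succ lt x x' -> z != x -> z != x' -> turnout v x' z <= turnout v x z.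
Proof.
case: v_adm => _ _ _ _ iv xx' zx zx'.
by have [+ _] := iv x x' z xx' zx zx'; rewrite subr_ge0.
Qed.

Lemma turnout_le_interval z a b :
  lt z a \/ lt b z -> lt a b -> turnout v b z <= turnout v a z.
Proof.
elim/(well_founded_ind (strict_wf lt_total)): b => b IHb z_out ab.
have [p [pb p_imm] ap] := strict_exists_pred lt_total ab.
have z_out' : lt z a \/ lt p z.
  by case: z_out => [|bz]; [left | right; apply: strict_trans pb bz].
have z_ne c : lt z c \/ lt c z -> z != c.
  by case=> /(strict_neq lt_total) //; rewrite eq_sym.
have zp : z != p.
  apply: z_ne; case: z_out' => [za|]; last by right.
  by left; case: ap => [<-//|]; apply: strict_trans za.
have zb : z != b.
  by apply: z_ne; case: z_out => [za|]; [left; apply: strict_trans za ab | right].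
apply: le_trans (turnout_step (conj pb p_imm) zp zb) _.
by case: ap => [<-//|ap]; apply: (IHb p pb z_out' ap).
Qed.

Lemma zero_turnout_row a b x :
  lt a b -> turnout v a b = 0 -> x != b -> v b x = 0.
Proof.
move=> ab tab0 xb; have ab' := strict_neq lt_total ab.
have ba' : b != a by rewrite eq_sym.
have [vab0 vba0] : v a b = 0 /\ v b a = 0.
  by move: tab0 (v_ge0 ab') (v_ge0 ba'); rewrite /turnout; lra.
apply/eqP; rewrite eq_le v_ge0 ?andbT; last by rewrite eq_sym.
case: (strict_trichotomy lt_total x a) => [->|xa|ax]; first by rewrite vba0.
  by rewrite (v_min xa ab) -vba0 ge_min lexx.
case: (strict_trichotomy lt_total x b) => [xbE|xb'|bx]; first by rewrite xbE eqxx in xb.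
  by apply: le_trans (v_lt xb') _; rewrite -vab0 (v_max ax xb') le_max lexx orbT.
have vax0 : v a x = 0.
  have ax' := strict_neq lt_total ax; have xa' : x != a by rewrite eq_sym.
  move: (turnout_le_interval (or_introl ab) bx) (v_ge0 ax') (v_ge0 xa').
  by rewrite /turnout vab0 vba0; lra.
by rewrite -vax0 (v_max ab bx) le_max lexx orbT.
Qed.

Lemma zero_turnout_rows :
  exists Y : {set T},
    (forall x xb, x \notin Y -> xb \notin Y -> x != xb -> 0 < turnout v x xb) /\
    (forall y x, y \in Y -> x != y -> v y x = 0).
Proof.
pose Y := [set c | [forall x, (x != c) ==> (v c x == 0)]].
have zero_row_mem a b : lt a b -> turnout v a b = 0 -> b \in Y.
  move=> ab tab0; rewrite inE; apply/forallP => x; apply/implyP => xb.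
  by apply/eqP; apply: zero_turnout_row ab tab0 xb.
exists Y; split; last by move=> y x; rewrite inE => /forallP/(_ x)/implyP/[apply]/eqP.
move=> x xb xY xbY xxb; have xbx : xb != x by rewrite eq_sym.
rewrite lt_neqAle addr_ge0 ?v_ge0 // andbT; apply/eqP => /esym t0.
case: (strict_trichotomy lt_total x xb) => [xE|x_xb|xb_x].
- by rewrite xE eqxx in xxb.
- by rewrite (zero_row_mem _ _ x_xb t0) in xbY.
- by rewrite (zero_row_mem _ _ xb_x) // /turnout addrC in xY.
Qed.

Lemma cross_product_le x y z :
  lt x y -> z != x -> z != y -> v y z * v z x <= v x z * v z y.
Proof.
move=> xy zx zy; have ge0 a b : a != b -> 0 <= v a b by apply: v_ge0.
have yz : y != z by rewrite eq_sym.
case: (strict_trichotomy lt_total z x) => [zxE|z_x|x_z]; first by rewrite zxE eqxx in zx.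
  apply: ler_pM; rewrite ?ge0 //.
    by rewrite (v_min z_x xy) ge_min lexx orbT.
  by rewrite (v_max z_x xy) le_max lexx.
case: (strict_trichotomy lt_total z y) => [zyE|z_y|y_z]; first by rewrite zyE eqxx in zy.
  by rewrite [v x z * _]mulrC; apply: ler_pM; rewrite ?ge0 ?v_lt.
apply: ler_pM; rewrite ?ge0 //.
  by rewrite (v_max xy y_z) le_max lexx orbT.
by rewrite (v_min xy y_z) ge_min lexx.
Qed.

(* Take [y0] maximal below [x] with [v x y0 = 0]: every weight from above [y0]
   down to [y0] or below vanishes, so the positive edges never leave the set of
   elements above [y0], which contains [x] but not [y]. *)
Lemma zero_down_not_connect x y :
  lt y x -> v x y = 0 -> ~~ connect (pos_edge v) x y.
Proof.
move=> yx vxy0; have Py : lt y x && (v x y == 0) by rewrite yx vxy0 eqxx.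
have [y0 /andP[y0x /eqP vxy00] y0_max] :=
  strict_exists_max lt_total (P := fun c => lt c x && (v x c == 0)) Py.
have down_le0 c : lt y0 c -> v c y0 <= 0.
  move=> y0c; case: (strict_trichotomy lt_total c x) => [->|cx|xc].
  - by rewrite vxy00.
  - have : Num.min (v x c) (v c y0) <= 0 by rewrite -(v_min y0c cx) vxy00.
    rewrite ge_min => /orP[vxc|//].
    suff : lt c x && (v x c == 0) by move/y0_max; rewrite y0c.
    by rewrite cx eq_le vxc v_ge0 // eq_sym (strict_neq lt_total cx).
  - by rewrite (v_min y0x xc) -vxy00 ge_min lexx orbT.
have cut_le0 c d : lt y0 c -> ~~ lt y0 d -> v c d <= 0.
  move=> y0c y0d; case: (strict_trichotomy lt_total d y0) => [->|dy0|y0d'].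
  - exact: down_le0.
  - by rewrite (v_min dy0 y0c); apply: le_trans (down_le0 _ y0c); rewrite ge_min lexx.
  - by rewrite y0d' in y0d.
apply/negP => xy_conn.
have : lt y0 y.
  apply: (connect_stable (U := fun c => lt y0 c)) xy_conn y0x => a b /andP[_ vab] y0a.
  by apply: contraTT vab => y0b; rewrite -leNgt cut_le0.
by apply/negP; apply: y0_max Py.
Qed.

Section PositiveTurnouts.
Hypothesis t_gt0 : forall a b, a != b -> 0 < turnout v a b.

Lemma turnout_ratio_gt0 a b : a != b -> (0 < turnout_ratio v a b) = (0 < v a b).
Proof. by move=> ab; rewrite pmulr_lgt0 // invr_gt0 t_gt0. Qed.

Lemma turnout_ratio_pair_le x y :
  lt x y -> turnout_ratio v y x <= turnout_ratio v x y.
Proof.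
move=> xy; have xy' := strict_neq lt_total xy; have yx' : y != x by rewrite eq_sym.
apply: ratio_le; rewrite ?t_gt0 //.
by apply: ler_pM; rewrite ?v_ge0 ?v_lt.
Qed.

Lemma turnout_ratio_column_le x y z :
  lt x y -> z != x -> z != y -> turnout_ratio v y z <= turnout_ratio v x z.
Proof.
move=> xy zx zy; apply: ratio_le; rewrite ?t_gt0 // 1?eq_sym //.
exact: cross_product_le.
Qed.

Lemma turnout_ratio_row_le x y z :
  lt x y -> z != x -> z != y -> turnout_ratio v z x <= turnout_ratio v z y.
Proof.
move=> xy zx zy; apply: ratio_le; rewrite ?t_gt0 //.
by rewrite mulrC [v z y * _]mulrC; apply: cross_product_le.
Qed.

Lemma top_dominant_turnout_ratio X :
  top_dominant v X -> top_dominant (turnout_ratio v) X.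
Proof.
apply: top_dominant_pos_edge => // [a b ab|a b].
  by rewrite divr_ge0 ?v_ge0 // ltW ?t_gt0.
rewrite /pos_edge /=; case: (eqVneq a b) => [//|ab] /=.
by rewrite turnout_ratio_gt0.
Qed.

Lemma top_dominant_row_gt0 X x y :
  top_dominant v X -> x \in X -> y != x -> 0 < v x y.
Proof.
move=> X_top xX yx.
case: (strict_trichotomy lt_total x y) => [xyE|xy|y_x]; first by rewrite xyE eqxx in yx.
  have := t_gt0 (strict_neq lt_total xy); have := v_lt xy.
  by rewrite /turnout; lra.
rewrite lt_neqAle v_ge0 1?eq_sym // andbT.
have := top_dominant_connect v_ge0 X_top xX y; apply: contraTneq => /esym vxy0.
exact: zero_down_not_connect.
Qed.

End PositiveTurnouts.

End CLCStructure.

Theorem proposition3p6 (R : realFieldType) (T : finType)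
    (v : T -> T -> R) (lt : rel T)
    (Hv : llull v) (Hadm : admissible v lt) :
  (* (1) *)
  ((forall x y : T, x != y -> 0 < turnout v x y) ->
   let q := fun x y => v x y / turnout v x y in
   (forall x y, lt x y -> q y x <= q x y) /\
   (forall x y z, lt x y -> z != x -> z != y -> q y z <= q x z /\ q z x <= q z y) /\
   (forall X : {set T}, top_dominant v X ->
      top_dominant q X /\ (forall x y, x \in X -> y != x -> 0 < q x y)))
  /\
  (* (2) *)
  ((exists x y : T, x != y /\ turnout v x y = 0) ->
   exists Y : {set T},
     (forall x xb, x \notin Y -> xb \notin Y -> x != xb -> 0 < turnout v x xb) /\
     (forall y x, y \in Y -> x != y -> v y x = 0)).
Proof.
split; last first.
  (* The conclusion of (2) holds without its hypothesis. *)
  by move=> _; exact: zero_turnout_rows Hv Hadm.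
move=> t_gt0 q; split; first exact: turnout_ratio_pair_le.
split.
  by move=> x y z xy zx zy; split;
    [exact: turnout_ratio_column_le xy zx zy | exact: turnout_ratio_row_le xy zx zy].
move=> X X_top; split; first exact: top_dominant_turnout_ratio.
move=> x y xX yx; rewrite turnout_ratio_gt0 1?eq_sym //.
exact: (top_dominant_row_gt0 Hv Hadm t_gt0 X_top xX yx).
Qed.
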